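(* Let $n\ge3$ and let $\sigma$ be an asymptotically flat Riemannian metric on the complement of a ball in $\mathbb{R}^n$. For any $h>0$ and any $r_1>0$ there exist $r_0\ge r_1$, depending only on $\sigma$, and a rotationally symmetric function $b\colon\mathbb{R}^n\setminus B_{r_0}(0)\to\mathbb{R}$ such that (i) $b>0$; (ii) $b(x)\to0$ as $|x|\to\infty$; (iii) $b(x)\ge h$ for $|x|=r_0$; (iv) $g^{ij}(\sigma,\nabla b)\,{}^\sigma\nabla^2_{ij}b\le0$, i.e. $b$ is a static supersolution.
   Context: Asymptotic flatness: $|\sigma_{ij}-\delta_{ij}|\lesssim\omega(r)$ and $|\partial\sigma_{ij}|\lesssim\omega(r)/r$ for large $r=|x|$, where $\omega$ is bounded with $\omega(r)\to0$ as $r\to\infty$. For $|\nabla w|_\sigma<1$, $g^{ij}(\sigma,\nabla w)=\sigma^{ij}+\frac{\sigma^{ik}\sigma^{jl}w_kw_l}{1-\sigma^{kl}w_kw_l}$, and ${}^\sigma\nabla^2_{ij}w=w_{ij}-\Gamma^k_{ij}w_k$ is the Hessian with respect to $\sigma$. *)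

From HB Require Import structures.
From mathcomp Require Import all_boot all_order all_algebra.
From mathcomp Require Import all_classical all_reals all_analysis.
Set Implicit Arguments. Unset Strict Implicit. Unset Printing Implicit Defensive.
Import Order.TTheory GRing.Theory Num.Theory.
Import numFieldNormedType.Exports.
Local Open Scope ring_scope.

Section Defs.
Variables (R : realType) (n : nat).

Definition enorm (x : 'rV[R]_n) : R := Num.sqrt (\sum_(i < n) x 0 i ^+ 2).

Definition ebasis (i : 'I_n) : 'rV[R]_n := delta_mx 0 i.

Definition partial (i : 'I_n) (f : 'rV[R]_n -> R) : 'rV[R]_n -> R :=
  fun x => derive f x (ebasis i).

Definition dpartial (s : seq 'I_n) (f : 'rV[R]_n -> R) : 'rV[R]_n -> R :=
  foldr partial f s.

Definition smooth_on (A : set 'rV[R]_n) (f : 'rV[R]_n -> R) : Prop :=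
  forall (s : seq 'I_n) (x : 'rV[R]_n), A x -> differentiable (dpartial s f) x.

Definition riemannian_exterior (r : R) (sigma : 'rV[R]_n -> 'M[R]_n) : Prop :=
  (forall i j, smooth_on [set x | r < enorm x] (fun y => sigma y i j)) /\
  (forall x, r < enorm x -> forall i j, sigma x i j = sigma x j i) /\
  (forall x, r < enorm x -> forall v : 'rV[R]_n, v != 0 ->
      0 < (v *m sigma x *m v^T) 0 0).

Definition asymptotically_flat (sigma : 'rV[R]_n -> 'M[R]_n) : Prop :=
  exists omega : R -> R,
    (exists M : R, forall r, `|omega r| <= M) /\
    (forall eps : R, 0 < eps -> exists M : R, forall r, M <= r -> `|omega r| < eps) /\
    exists (C rho : R), forall x, rho <= enorm x ->
      (forall i j, `|sigma x i j - (i == j)%:R| <= C * omega (enorm x)) /\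
      (forall i j k, `|partial k (fun y => sigma y i j) x| <= C * omega (enorm x) / enorm x).

Definition sinv (sigma : 'rV[R]_n -> 'M[R]_n) (x : 'rV[R]_n) : 'M[R]_n :=
  invmx (sigma x).

Definition christoffel (sigma : 'rV[R]_n -> 'M[R]_n) (k i j : 'I_n)
    (x : 'rV[R]_n) : R :=
  2^-1 * \sum_(l < n) sinv sigma x k l *
    (partial i (fun y => sigma y j l) x + partial j (fun y => sigma y i l) x
     - partial l (fun y => sigma y i j) x).

Definition grad_sq (sigma : 'rV[R]_n -> 'M[R]_n) (w : 'rV[R]_n -> R)
    (x : 'rV[R]_n) : R :=
  \sum_(k < n) \sum_(l < n) sinv sigma x k l * partial k w x * partial l w x.

Definition gmetric (sigma : 'rV[R]_n -> 'M[R]_n) (w : 'rV[R]_n -> R)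
    (i j : 'I_n) (x : 'rV[R]_n) : R :=
  sinv sigma x i j +
  (\sum_(k < n) \sum_(l < n)
     sinv sigma x i k * sinv sigma x j l * partial k w x * partial l w x)
  / (1 - grad_sq sigma w x).

Definition shess (sigma : 'rV[R]_n -> 'M[R]_n) (w : 'rV[R]_n -> R)
    (i j : 'I_n) (x : 'rV[R]_n) : R :=
  partial i (partial j w) x - \sum_(k < n) christoffel sigma k i j x * partial k w x.

Definition static_op (sigma : 'rV[R]_n -> 'M[R]_n) (w : 'rV[R]_n -> R)
    (x : 'rV[R]_n) : R :=
  \sum_(i < n) \sum_(j < n) gmetric sigma w i j x * shess sigma w i j x.

End Defs.

From HB Require Import structures.
From mathcomp Require Import all_boot all_order all_algebra.
From mathcomp Require Import all_classical all_reals all_analysis.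
From mathcomp Require Import ring lra.
Import Order.TTheory GRing.Theory Num.Theory.
Import numFieldNormedType.Exports.
Local Open Scope ring_scope.
Local Open Scope classical_set_scope.
Set Implicit Arguments. Unset Strict Implicit.

(* The barrier is the radial function b = (L^3/5) t^(-1/4) with t = L^4 + |x|^2
   and L = 10 h + r0 + 1.  Its Euclidean gradient is -a x and its Hessian is
   -a (delta_ij - kappa x_i x_j) with a = b / (2 t) and kappa = 5 / (2 t), so
   its trace is at most a (5/2 - n) <= -a/2, while a |x| <= 1/10.  Far out,
   sigma is within d of the identity with |d sigma| <= d / |x|; then sigma^-1
   is within 2 d of the identity and |Gamma| |x| = O(n d), so for n^6 d small
   the gradient term of g^ij and the Christoffel term change the trace by a
   small multiple of a only, and the static operator stays negative. *)

Section SumBounds.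
Variable R : realFieldType.

Lemma ler_norm_sum_const m (f : 'I_m -> R) M : (forall i, `|f i| <= M) ->
  `|\sum_(i < m) f i| <= m%:R * M.
Proof.
move=> fM; apply: le_trans (ler_norm_sum _ _ _) _.
have -> : m%:R * M = \sum_(i < m) M by rewrite sumr_const card_ord mulr_natl.
exact: ler_sum.
Qed.

Lemma sum_delta_mull m (f : 'I_m -> R) k : \sum_(l < m) (k == l)%:R * f l = f k.
Proof.
rewrite (bigD1 k) //= eqxx mul1r big1 ?addr0 // => l.
by rewrite eq_sym => /negbTE ->; rewrite mul0r.
Qed.

End SumBounds.

Section NearIdentity.
Variables (R : realFieldType) (n : nat).

Lemma posdef_unitmx (A : 'M[R]_n) :
  (forall v : 'rV[R]_n, v != 0 -> 0 < (v *m A *m v^T) 0 0) -> A \in unitmx.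
Proof.
move=> A_pd; rewrite unitmxE unitfE; apply/negP => /det0P [v v_neq0 vA].
by have := A_pd v v_neq0; rewrite vA mul0mx mxE ltxx.
Qed.

Lemma norm_entry_le_near_id (A : 'M[R]_n) d i j :
  `|A i j - (i == j)%:R| <= d -> `|A i j| <= 1 + d.
Proof.
move=> Aij; have := ler_normD (A i j - (i == j)%:R) (i == j)%:R; rewrite subrK.
have : `|(i == j)%:R : R| <= 1 by case: (i == j); rewrite ?normr0 ?normr1.
by lra.
Qed.

(* Writing [A^-1 - 1 = - A^-1 (A - 1)] bounds the row sums [m] of [|A^-1|] by
   [1 + n d m], hence [m <= 2]. *)
Lemma invmx_near_id (A : 'M[R]_n) (d : R) : A \in unitmx ->
  (forall i j, `|A i j - (i == j)%:R| <= d) -> n%:R * d <= 2^-1 ->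
  forall i j, `|invmx A i j - (i == j)%:R| <= 2 * d.
Proof.
move=> A_unit A_near nd_small i j.
set S := invmx A.
have SA_id k l : \sum_(m < n) S k m * A m l = (k == l)%:R.
  by have := congr1 (fun M : 'M[R]_n => M k l) (mulVmx A_unit); rewrite !mxE.
have S_sub_id k l :
    S k l - (k == l)%:R = - \sum_(m < n) S k m * (A m l - (m == l)%:R).
  rewrite -SA_id -{1}(sum_delta_mull (S k) l).
  rewrite -sumrB -sumrN; apply: eq_bigr => m _; rewrite eq_sym; ring.
have d_ge0 : 0 <= d := le_trans (normr_ge0 _) (A_near i i).
set m := \sum_(k < n) `|S i k|.
have m_ge0 : 0 <= m by apply: sumr_ge0.
have row_near l : `|S i l - (i == l)%:R| <= d * m.
  rewrite S_sub_id normrN /m mulr_sumr; apply: le_trans (ler_norm_sum _ _ _) _.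
  by apply: ler_sum => k _; rewrite normrM mulrC; apply: ler_wpM2r.
have m_le : m <= 1 + n%:R * (d * m).
  have -> : 1 + n%:R * (d * m) = \sum_(l < n) (`|(i == l)%:R : R| + d * m).
    rewrite big_split /= sumr_const card_ord mulr_natl; congr (_ + _).
    rewrite (bigD1 i) //= eqxx normr1 big1 ?addr0 // => l.
    by rewrite eq_sym => /negbTE ->; rewrite normr0.
  apply: ler_sum => l _.
  have := ler_normD (S i l - (i == l)%:R) (i == l)%:R; rewrite subrK.
  by move/le_trans; apply; rewrite addrC lerD2l.
have m_le2 : m <= 2.
  have : n%:R * (d * m) <= 2^-1 * m by rewrite mulrA; apply: ler_wpM2r.
  by lra.
apply: le_trans (row_near j) _; rewrite mulrC; exact: ler_wpM2r.
Qed.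

End NearIdentity.

Section StaticEstimate.
Variables (R : realFieldType) (n : nat).
Hypothesis n_ge3 : (3 <= n)%N.
Local Notation N := (n%:R : R).

(* At a point [x] with [|x| = rho], [S] stands for [sigma^-1], [Gm] for the
   Christoffel symbols, and [p], [H] for the Euclidean gradient and Hessian of
   the barrier. *)
Variables (a kap eta gam rho : R) (x : 'I_n -> R) (S : 'M[R]_n).
Variables (Gm : 'I_n -> 'I_n -> 'I_n -> R) (p : 'I_n -> R) (H : 'I_n -> 'I_n -> R).
Hypotheses (a_gt0 : 0 < a) (rho_ge0 : 0 <= rho).
Hypothesis rho_sqE : rho ^+ 2 = \sum_(k < n) x k ^+ 2.
Hypothesis a_rho : a ^+ 2 * rho ^+ 2 <= 100^-1.
Hypotheses (kap_ge0 : 0 <= kap) (kap_rho : kap * rho ^+ 2 <= 5 / 2).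
Hypothesis S_near_id : forall i j, `|S i j - (i == j)%:R| <= eta.
Hypothesis eta_small : N ^+ 2 * eta <= 100^-1.
Hypothesis Gm_bound : forall k i j, `|Gm k i j| * rho <= gam.
Hypothesis gam_small : N ^+ 5 * gam <= 1.
Hypothesis pE : forall k, p k = - a * x k.
Hypothesis HE : forall i j, H i j = - a * (i == j)%:R + kap * a * x i * x j.

Let y i := \sum_(k < n) S i k * x k.
Let w := \sum_(k < n) \sum_(l < n) S k l * x k * x l.
Let G := \sum_(k < n) \sum_(l < n) S k l * p k * p l.
Let q := a ^+ 2 / (1 - G).
Let g i j :=
  S i j + (\sum_(k < n) \sum_(l < n) S i k * S j l * p k * p l) / (1 - G).

Let N_ge3 : 3 <= N. Proof. by rewrite (ler_nat R 3 n). Qed.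

Let i0 : 'I_n := Ordinal n_ge3.

Let eta_ge0 : 0 <= eta. Proof. exact: le_trans (normr_ge0 _) (S_near_id i0 i0). Qed.

Let eta_le : eta <= 900^-1.
Proof.
have : 9 * eta <= N ^+ 2 * eta by apply: ler_wpM2r => //; have := N_ge3; nra.
by move: eta_small; lra.
Qed.

Let norm_x_le k : `|x k| <= rho.
Proof.
have : x k ^+ 2 <= rho ^+ 2.
  by rewrite rho_sqE (bigD1 k) //= lerDl; apply: sumr_ge0 => l _; exact: sqr_ge0.
rewrite -real_normK ?num_real // => x_sq_le.
by rewrite -(ler_pXn2r (isT : (0 < 2)%N)) ?nnegrE.
Qed.

Let quadform_near_sqnorm : `|w - rho ^+ 2| <= N ^+ 2 * eta * rho ^+ 2.
Proof.
have -> : w - rho ^+ 2 =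
    \sum_(k < n) \sum_(l < n) (S k l - (k == l)%:R) * x k * x l.
  rewrite rho_sqE /w -sumrB; apply: eq_bigr => k _.
  rewrite expr2 -(sum_delta_mull (fun l => x k * x l) k) -sumrB.
  by apply: eq_bigr => l _; ring.
have -> : N ^+ 2 * eta * rho ^+ 2 = N * (N * (eta * rho * rho)) by ring.
apply: ler_norm_sum_const => k; apply: ler_norm_sum_const => l.
by rewrite !normrM; apply: ler_pM; rewrite ?mulr_ge0 //; apply: ler_pM.
Qed.

Let w_ge0 : 0 <= w.
Proof.
have /ler_normlP [w_lb _] := quadform_near_sqnorm.
have : N ^+ 2 * eta * rho ^+ 2 <= 100^-1 * rho ^+ 2 by rewrite ler_wpM2r ?sqr_ge0.
by move: w_lb (sqr_ge0 rho); lra.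
Qed.

Let w_le : w <= 101/100 * rho ^+ 2.
Proof.
have /ler_normlP [_ w_ub] := quadform_near_sqnorm.
have : N ^+ 2 * eta * rho ^+ 2 <= 100^-1 * rho ^+ 2 by rewrite ler_wpM2r ?sqr_ge0.
by move: w_ub; lra.
Qed.

Let GE : G = a ^+ 2 * w.
Proof.
rewrite /G /w mulr_sumr; apply: eq_bigr => k _; rewrite mulr_sumr.
by apply: eq_bigr => l _; rewrite !pE; ring.
Qed.

Let G_le : G <= 101/10000.
Proof. by rewrite GE; move: a_rho (ler_wpM2l (sqr_ge0 a) w_le); lra. Qed.

Let q_ge0 : 0 <= q. Proof. by rewrite divr_ge0 ?sqr_ge0 //; move: G_le; lra. Qed.

Let gE i j : g i j = S i j + q * (y i * y j).
Proof.
rewrite /g /q mulrAC /y big_distrlr mulr_sumr /=; congr (_ + _ / _).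
apply: eq_bigr => k _; rewrite mulr_sumr; apply: eq_bigr => l _.
by rewrite !pE; ring.
Qed.

Let flat_partE : \sum_(i < n) \sum_(j < n) g i j * H i j =
  - a * \sum_(i < n) (S i i + q * y i ^+ 2) + kap * a * w + kap * a * q * w ^+ 2.
Proof.
have diagE : \sum_(i < n) (S i i + q * y i ^+ 2) =
    \sum_(i < n) \sum_(j < n) (i == j)%:R * (S i j + q * (y i * y j)).
  by apply: eq_bigr => i _; rewrite sum_delta_mull expr2.
have w_sqE : w ^+ 2 = \sum_(i < n) \sum_(j < n) (y i * x i) * (y j * x j).
  have -> : w = \sum_(i < n) y i * x i.
    by apply: eq_bigr => i _; rewrite /y mulr_suml; apply: eq_bigr => k _; ring.
  by rewrite expr2 big_distrlr.
rewrite diagE w_sqE /w !mulr_sumr -!big_split; apply: eq_bigr => i _.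
rewrite !mulr_sumr -!big_split; apply: eq_bigr => j _ /=.
by rewrite gE HE; ring.
Qed.

Let trace_ge : 3 * (1 - eta) <= \sum_(i < n) S i i.
Proof.
have diag_ge i : 1 - eta <= S i i.
  by have /ler_normlP [+ _] := S_near_id i i; rewrite eqxx /=; lra.
apply: le_trans (_ : N * (1 - eta) <= _).
  by rewrite ler_wpM2r ?N_ge3 //; move: eta_le; lra.
have -> : N * (1 - eta) = \sum_(i < n) (1 - eta).
  by rewrite sumr_const card_ord mulr_natl.
by apply: ler_sum => i _.
Qed.

Let flat_part_le : \sum_(i < n) \sum_(j < n) g i j * H i j <= - (44/100) * a.
Proof.
have -> : \sum_(i < n) \sum_(j < n) g i j * H i j =
    a * (- \sum_(i < n) S i i - q * \sum_(i < n) y i ^+ 2 + kap * w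
         + (kap * w) * (q * w)).
  by rewrite flat_partE big_split /= -mulr_sumr; ring.
rewrite [X in _ <= X]mulrC ler_pM2l //.
have : 0 <= q * \sum_(i < n) y i ^+ 2.
  by apply/mulr_ge0/sumr_ge0 => // i _; exact: sqr_ge0.
have kw_le : kap * w <= 2525/1000.
  by move: kap_rho (ler_wpM2l kap_ge0 w_le); lra.
have qw_le : q * w <= 103/10000.
  by rewrite /q mulrAC -GE ler_pdivrMr; move: G_le; lra.
have : (kap * w) * (q * w) <= 2525/1000 * (103/10000).
  by apply: ler_pM => //; apply: mulr_ge0.
by move: trace_ge eta_le; lra.
Qed.

Let norm_g_le i j : `|g i j| <= N ^+ 2 / 8.
Proof.
have norm_y_le k : `|y k| <= N * ((1 + eta) * rho).
  apply: ler_norm_sum_const => l; rewrite normrM.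
  by apply: ler_pM => //; apply: norm_entry_le_near_id.
have yy_le : `|y i * y j| <= N ^+ 2 * (1 + eta) ^+ 2 * rho ^+ 2.
  have -> : N ^+ 2 * (1 + eta) ^+ 2 * rho ^+ 2 =
      (N * ((1 + eta) * rho)) * (N * ((1 + eta) * rho)) by ring.
  by rewrite normrM; apply: ler_pM.
have q_rho : q * rho ^+ 2 <= 102/10000.
  rewrite /q mulrAC ler_pdivrMr; last by move: G_le; lra.
  by move: G_le a_rho; lra.
have eta_sq : (1 + eta) ^+ 2 <= 10023/10000.
  by rewrite expr2; move: eta_ge0 eta_le; nra.
have qyy_le : `|q * (y i * y j)| <= N ^+ 2 * (10023/10000 * (102/10000)).
  rewrite normrM (ger0_norm q_ge0); apply: le_trans (ler_wpM2l q_ge0 yy_le) _.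
  have -> : q * (N ^+ 2 * (1 + eta) ^+ 2 * rho ^+ 2) =
      N ^+ 2 * ((1 + eta) ^+ 2 * (q * rho ^+ 2)) by ring.
  rewrite ler_wpM2l ?sqr_ge0 //.
  by apply: ler_pM; rewrite ?sqr_ge0 ?(mulr_ge0 q_ge0 (sqr_ge0 rho)).
have N_sq : 9 <= N ^+ 2 by rewrite expr2; move: N_ge3; nra.
rewrite gE; apply: le_trans (ler_normD _ _) _.
by move: (norm_entry_le_near_id (S_near_id i j)) qyy_le N_sq eta_le; lra.
Qed.

Let christoffel_part_le :
  `|\sum_(i < n) \sum_(j < n) g i j * \sum_(k < n) Gm k i j * p k| <= a / 8.
Proof.
have Gm_p_le i j : `|\sum_(k < n) Gm k i j * p k| <= N * (a * gam).
  apply: ler_norm_sum_const => k; rewrite pE !normrM normrN (gtr0_norm a_gt0).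
  rewrite mulrCA ler_wpM2l ?(ltW a_gt0) //.
  exact: le_trans (ler_wpM2l (normr_ge0 _) (norm_x_le k)) (Gm_bound k i j).
apply: le_trans (_ : _ <= N * (N * (N ^+ 2 / 8 * (N * (a * gam))))) _.
  apply: ler_norm_sum_const => i; apply: ler_norm_sum_const => j.
  by rewrite normrM; apply: ler_pM.
have -> : N * (N * (N ^+ 2 / 8 * (N * (a * gam)))) = (N ^+ 5 * gam) * (a / 8) by ring.
by rewrite -[X in _ <= X]mul1r ler_wpM2r ?divr_ge0 ?(ltW a_gt0).
Qed.

Lemma static_estimate :
  \sum_(k < n) \sum_(l < n) S k l * p k * p l < 1 /\
  \sum_(i < n) \sum_(j < n)
    (S i j + (\sum_(k < n) \sum_(l < n) S i k * S j l * p k * p l) /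
              (1 - \sum_(k < n) \sum_(l < n) S k l * p k * p l)) *
    (H i j - \sum_(k < n) Gm k i j * p k) <= 0.
Proof.
split; first by move: G_le; rewrite /G; lra.
have -> : \sum_(i < n) \sum_(j < n) g i j * (H i j - \sum_(k < n) Gm k i j * p k) =
    \sum_(i < n) \sum_(j < n) g i j * H i j
    - \sum_(i < n) \sum_(j < n) g i j * \sum_(k < n) Gm k i j * p k.
  rewrite -sumrB; apply: eq_bigr => i _; rewrite -sumrB.
  by apply: eq_bigr => j _; rewrite mulrBr.
have /ler_normlP [christoffel_lb _] := christoffel_part_le.
by move: flat_part_le a_gt0; lra.
Qed.

End StaticEstimate.

Section ShiftedSqnorm.
Variables (R : realType) (n : nat).
Implicit Types (x y : 'rV[R]_n) (B : R).

Definition coord (j : 'I_n) y : R := y 0 j.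

Lemma partial_coord j i x : partial i (coord j) x = (i == j)%:R.
Proof.
rewrite /partial /derive; apply: cvg_lim => //.
apply: (@cvg_trans _ (cst ((i == j)%:R : R) @ 0^')); last exact: cvg_cst.
apply: near_eq_cvg; near=> h => /=.
rewrite /coord /ebasis !mxE eqxx /= addrK /GRing.scale /= mulKf ?(eq_sym i) //.
near: h; exact: nbhs_dnbhs_neq.
Unshelve. all: end_near. Qed.

Global Instance is_derive_coord j i x :
  is_derive x (ebasis R i) (coord j) ((i == j)%:R).
Proof.
rewrite -(partial_coord j i x); apply/derivableP/diff_derivable.
exact: differentiable_coord.
Qed.

Definition shifted_sqnorm B : 'rV[R]_n -> R := cst B + \sum_(k < n) coord k ^+ 2.

Lemma shifted_sqnormE B y : shifted_sqnorm B y = B + \sum_(k < n) y 0 k ^+ 2.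
Proof. by rewrite /shifted_sqnorm !fctE fct_sumE. Qed.

Lemma enorm_ge0 y : 0 <= enorm y.
Proof. exact: sqrtr_ge0. Qed.

Lemma enorm_sqE y : enorm y ^+ 2 = \sum_(k < n) y 0 k ^+ 2.
Proof. by rewrite sqr_sqrtr //; apply: sumr_ge0 => k _; exact: sqr_ge0. Qed.

Lemma shifted_sqnorm_enorm B y : shifted_sqnorm B y = B + enorm y ^+ 2.
Proof. by rewrite shifted_sqnormE enorm_sqE. Qed.

Lemma shifted_sqnorm_gt0 B y : 0 < B -> 0 < shifted_sqnorm B y.
Proof.
by move=> B_gt0; rewrite shifted_sqnorm_enorm ltr_pwDl ?sqr_ge0.
Qed.

Lemma differentiable_shifted_sqnorm B x : differentiable (shifted_sqnorm B) x.
Proof.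
apply: differentiableD => //; apply: differentiable_sum => k.
exact/differentiableX/differentiable_coord.
Qed.

Global Instance is_derive_shifted_sqnorm B i x :
  is_derive x (ebasis R i) (shifted_sqnorm B) (2 * x 0 i).
Proof.
apply: is_derive_eq; rewrite add0r (bigD1 i) //= big1 ?addr0.
  by rewrite eqxx /GRing.scale /= mulr1 expr1 /coord.
by move=> k; rewrite eq_sym => /negbTE ->; rewrite /GRing.scale /= mulr0.
Qed.

Section Composition.
Variables (f : R -> R) (B : R) (x : 'rV[R]_n).
Hypothesis f_derivable : derivable f (shifted_sqnorm B x) 1.

Lemma differentiable_comp_shifted_sqnorm : differentiable (f \o shifted_sqnorm B) x.
Proof.
apply: differentiable_comp; first exact: differentiable_shifted_sqnorm.
exact/derivable1_diffP.
Qed.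

Lemma is_derive_comp_shifted_sqnorm i : is_derive x (ebasis R i)
  (f \o shifted_sqnorm B) (derive1 f (shifted_sqnorm B x) * (2 * x 0 i)).
Proof.
have -> : derive1 f (shifted_sqnorm B x) * (2 * x 0 i) =
    'D_(ebasis R i) (f \o shifted_sqnorm B) x.
  rewrite deriveE; last exact: differentiable_comp_shifted_sqnorm.
  rewrite diff_comp; [|exact: differentiable_shifted_sqnorm|exact/derivable1_diffP].
  rewrite /= deriv1E // -deriveE; last exact: differentiable_shifted_sqnorm.
  by rewrite derive_val /GRing.scale /= mulrC.
apply/derivableP/diff_derivable; exact: differentiable_comp_shifted_sqnorm.
Qed.

End Composition.

Section Power.
Variables (al B : R).
Hypothesis B_gt0 : 0 < B.

Let derivable_powR_shifted_sqnorm x :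
  derivable (fun s : R => s `^ al) (shifted_sqnorm B x) 1.
Proof.
apply: derivable_powR; rewrite in_itv /= andbT; exact: shifted_sqnorm_gt0.
Qed.

Lemma differentiable_powR_shifted_sqnorm x :
  differentiable (fun y => shifted_sqnorm B y `^ al) x.
Proof.
apply: (@differentiable_comp_shifted_sqnorm (fun s : R => s `^ al)).
exact: derivable_powR_shifted_sqnorm.
Qed.

Global Instance is_derive_powR_shifted_sqnorm i x :
  is_derive x (ebasis R i) (fun y => shifted_sqnorm B y `^ al)
    (al * shifted_sqnorm B x `^ (al - 1) * (2 * x 0 i)).
Proof.
rewrite -powR_derive1; last by rewrite in_itv /= andbT shifted_sqnorm_gt0.
apply: (@is_derive_comp_shifted_sqnorm (fun s : R => s `^ al)).
exact: derivable_powR_shifted_sqnorm.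
Qed.

End Power.
End ShiftedSqnorm.

Lemma powR_subr1 (R : realType) (s a : R) : 0 < s -> s `^ (a - 1) = s `^ a / s.
Proof. by move=> s_gt0; rewrite powRB ?(gt_eqF s_gt0) ?implybT // powRr1 // ltW. Qed.

Lemma powR_neg_quarter (R : realType) (s : R) : 0 < s -> (s `^ (- 4^-1)) ^+ 4 * s = 1.
Proof.
move=> s_gt0; rewrite -powR_mulrn ?powR_ge0 // -powRrM.
by rewrite (_ : - 4^-1 * 4%:R = -1 :> R) ?powR_inv1 ?mulVf ?gt_eqF ?ltW //; field.
Qed.

(* Any exponent [al] with [2 (1 - al) < n] would do, since the flat Hessian of
   [t^al] has trace [2 al t^(al-2) (n t + 2 (al - 1) |x|^2)]; [al = -1/4] gives
   [5/2 < 3].  The scales [L^4] and [L^3/5] make [|grad b| |x| <= 1/10] and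
   [b >= L/10] on [|x| <= L]. *)
Definition profile (R : realType) (n : nat) (L : R) (y : 'rV[R]_n) : R :=
  L ^+ 3 / 5 * shifted_sqnorm (L ^+ 4) y `^ (- 4^-1).

Section Profile.
Variables (R : realType) (n : nat) (L : R).
Hypothesis L_gt0 : 0 < L.
Local Notation t := (@shifted_sqnorm R n (L ^+ 4)).
Local Notation b := (@profile R n L).

Let t_gt0 y : 0 < t y. Proof. exact/shifted_sqnorm_gt0/exprn_gt0. Qed.

Let db j y := L ^+ 3 / 5 * (- 4^-1) * 2 * (t y `^ (- 4^-1 - 1) * y 0 j).

Let partial_profile_db j : partial j b = db j.
Proof.
apply: funext => y; rewrite /partial.
have := is_deriveZ (L ^+ 3 / 5)
  (is_derive_powR_shifted_sqnorm (- 4^-1) (exprn_gt0 4 L_gt0) j y).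
by move=> D; rewrite (@derive_val _ _ _ _ _ _ _ D) /db /GRing.scale /=; ring.
Qed.

Lemma differentiable_profile x : differentiable b x.
Proof. exact/differentiableZ/differentiable_powR_shifted_sqnorm/exprn_gt0. Qed.

Lemma differentiable_partial_profile j x : differentiable (partial j b) x.
Proof.
rewrite partial_profile_db; apply/differentiableZ/differentiableM.
  exact/differentiable_powR_shifted_sqnorm/exprn_gt0.
exact: differentiable_coord.
Qed.

Lemma profile_gt0 x : 0 < b x.
Proof. by rewrite mulr_gt0 ?divr_gt0 ?exprn_gt0 ?powR_gt0. Qed.

Lemma partial_profile j x : partial j b x = - (b x / (2 * t x)) * x 0 j.
Proof.
rewrite partial_profile_db /db /profile powR_subr1 //.
by field; rewrite gt_eqF.
Qed.

Lemma partial2_profile i j x : partial i (partial j b) x =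
  - (b x / (2 * t x)) * (i == j)%:R
  + 5 / (2 * t x) * (b x / (2 * t x)) * x 0 i * x 0 j.
Proof.
rewrite partial_profile_db /partial.
have := is_deriveZ (L ^+ 3 / 5 * (- 4^-1) * 2) (is_deriveM
  (is_derive_powR_shifted_sqnorm (- 4^-1 - 1) (exprn_gt0 4 L_gt0) i x)
  (is_derive_coord j i x)).
move=> D; rewrite /db (@derive_val _ _ _ _ _ _ _ D) /GRing.scale /= /coord.
rewrite /profile !powR_subr1 //.
by field; rewrite gt_eqF.
Qed.

Lemma profile_radial x : b x = L ^+ 3 / 5 * (L ^+ 4 + enorm x ^+ 2) `^ (- 4^-1).
Proof. by rewrite /profile shifted_sqnorm_enorm. Qed.

Lemma profile_slope_small x : (b x / (2 * t x)) ^+ 2 * enorm x ^+ 2 <= 100^-1.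
Proof.
have s_gt0 := t_gt0 x; have us := powR_neg_quarter s_gt0.
have u_ge0 : 0 <= t x `^ (- 4^-1) by exact: powR_ge0.
have L4_le : L ^+ 4 <= t x by rewrite shifted_sqnorm_enorm lerDl sqr_ge0.
have r2_le : enorm x ^+ 2 <= t x.
  by rewrite shifted_sqnorm_enorm lerDr; exact: ltW (exprn_gt0 4 L_gt0).
rewrite /profile; move: (t x) (t x `^ _) s_gt0 us u_ge0 L4_le r2_le => s u.
move=> s_gt0 us u_ge0 L4_le r2_le.
have L6u2_le : L ^+ 6 * u ^+ 2 <= s.
  rewrite -(@ler_pXn2r _ 2) ?nnegrE ?mulr_ge0 ?exprn_ge0 ?(ltW L_gt0) ?(ltW s_gt0) //.
  rewrite -(ler_pM2r s_gt0).
  have -> : (L ^+ 6 * u ^+ 2) ^+ 2 * s = (L ^+ 4) ^+ 3 * (u ^+ 4 * s).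
    by rewrite -exprM; ring.
  rewrite us mulr1 (_ : s ^+ 2 * s = s ^+ 3); last by ring.
  by rewrite lerXn2r ?nnegrE // ?exprn_ge0 ?(ltW L_gt0) ?(ltW s_gt0).
apply: le_trans (_ : (L ^+ 3 / 5 * u / (2 * s)) ^+ 2 * s <= _).
  by rewrite ler_wpM2l ?sqr_ge0.
have -> : (L ^+ 3 / 5 * u / (2 * s)) ^+ 2 * s = (L ^+ 6 * u ^+ 2) / s / 100.
  by field; rewrite gt_eqF.
have : L ^+ 6 * u ^+ 2 / s <= 1 by rewrite ler_pdivrMr // mul1r.
by lra.
Qed.

Lemma profile_small_at_infinity eps : 0 < eps ->
  exists M, forall x, M <= enorm x -> `|b x| < eps.
Proof.
move=> eps_gt0; set c := L ^+ 3 / 5.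
have c_gt0 : 0 < c by rewrite divr_gt0 ?exprn_gt0.
exists ((c / eps) ^+ 2 + 1) => x x_far.
rewrite gtr0_norm ?profile_gt0 // /profile -/c.
have us := powR_neg_quarter (t_gt0 x); have u_gt0 := powR_gt0 (- 4^-1) (t_gt0 x).
move: (t x `^ _) us u_gt0 => u us u_gt0.
have t_big : (c / eps) ^+ 4 < t x.
  rewrite shifted_sqnorm_enorm (_ : 4 = 2 * 2)%N // exprM.
  apply: lt_le_trans (_ : enorm x ^+ 2 <= _); last by rewrite lerDr ltW ?exprn_gt0.
  by rewrite ltr_pXn2r ?nnegrE ?sqr_ge0 ?enorm_ge0 //; lra.
suff : c / eps * u < 1 by rewrite mulrAC ltr_pdivrMr // mul1r.
rewrite -(expr_lt1 (isT : (0 < 4)%N)); last first.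
  by apply: mulr_ge0; [rewrite divr_ge0 ?ltW | exact: ltW].
by rewrite exprMn -(ltr_pM2r (t_gt0 x)) -mulrA us mulr1 mul1r.
Qed.

Lemma profile_ge h x : 1 <= L -> 0 < h -> 10 * h <= L -> enorm x <= L -> h <= b x.
Proof.
move=> L_ge1 h_gt0 h_le x_le.
have s_gt0 := t_gt0 x; have us := powR_neg_quarter s_gt0.
have u_gt0 : 0 < t x `^ (- 4^-1) by exact: powR_gt0.
have s_le : t x <= 2 * L ^+ 4.
  rewrite shifted_sqnorm_enorm.
  have : enorm x ^+ 2 <= L ^+ 4.
    apply: le_trans (_ : L ^+ 2 <= _); last by rewrite ler_weXn2l.
    by rewrite lerXn2r // ?nnegrE ?enorm_ge0 ?(ltW L_gt0).
  by lra.
rewrite /profile; move: (t x) (t x `^ _) s_gt0 us u_gt0 s_le => s u.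
move=> s_gt0 us u_gt0 s_le.
rewrite -(ler_pXn2r (isT : (0 < 4)%N)) ?nnegrE; last 2 first.
- exact: ltW.
- by rewrite mulr_ge0 ?divr_ge0 ?exprn_ge0 ?ltW.
rewrite -(ler_pM2r s_gt0).
have -> : (L ^+ 3 / 5 * u) ^+ 4 * s = (L ^+ 4) ^+ 3 / 625 * (u ^+ 4 * s).
  by rewrite -exprM; field.
rewrite us mulr1.
have L4_ge1 : 1 <= L ^+ 4 by rewrite exprn_ege1.
have h4_le : (10 * h) ^+ 4 <= L ^+ 4.
  by rewrite lerXn2r // ?nnegrE ?(ltW L_gt0) //; lra.
have : h ^+ 4 * s <= (10 * h) ^+ 4 / 5000 * L ^+ 4.
  have -> : (10 * h) ^+ 4 / 5000 * L ^+ 4 = h ^+ 4 * (2 * L ^+ 4) by field.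
  by apply: ler_wpM2l => //; rewrite exprn_ge0 ?ltW.
move: (L ^+ 4) (h ^+ 4 * s) ((10 * h) ^+ 4) L4_ge1 h4_le => L4 lhs h4 L4_ge1 h4_le.
have : h4 * L4 <= L4 * L4 by rewrite ler_wpM2r //; lra.
have : L4 * L4 <= L4 ^+ 3 by rewrite -expr2 ler_weXn2l.
by nra.
Qed.

End Profile.

Lemma norm_christoffel_le (R : realType) (n : nat) (sigma : 'rV[R]_n -> 'M[R]_n)
    (x : 'rV[R]_n) (s e : R) :
  (forall k l, `|sinv sigma x k l| <= s) ->
  (forall i j k, `|partial k (fun y => sigma y i j) x| <= e) ->
  forall k i j, `|christoffel sigma k i j x| <= 3 / 2 * n%:R * s * e.
Proof.
move=> sinv_le dsigma_le k i j; rewrite /christoffel normrM ger0_norm //.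
have -> : 3 / 2 * n%:R * s * e = 2^-1 * (n%:R * (s * (3 * e))) by ring.
rewrite ler_wpM2l // ler_norm_sum_const // => l; rewrite normrM ler_pM //.
apply: le_trans (ler_normB _ _) _; apply: le_trans (lerD (ler_normD _ _) (lexx _)) _.
by move: (dsigma_le j l i) (dsigma_le i l j) (dsigma_le i j l); lra.
Qed.

Lemma asymptotically_flat_near_id (R : realType) (n : nat)
    (sigma : 'rV[R]_n -> 'M[R]_n) :
  asymptotically_flat sigma -> forall delta : R, 0 < delta ->
  exists rho : R, forall x, rho <= enorm x ->
  exists2 d : R, d <= delta &
    (forall i j, `|sigma x i j - (i == j)%:R| <= d) /\
    (forall i j k, `|partial k (fun y => sigma y i j) x| <= d / enorm x).
Proof.
case=> om [_ [om_vanish [C [rho flat]]]] delta delta_gt0.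
have C1_gt0 : 0 < `|C| + 1 by rewrite ltr_pwDr.
have [M om_small] := om_vanish _ (divr_gt0 delta_gt0 C1_gt0).
exists (Num.max rho M) => x; rewrite ge_max => /andP [rho_le M_le].
have [sigma_near dsigma_le] := flat x rho_le.
exists `|C * om (enorm x)|.
  rewrite normrM; apply: le_trans (_ : `|C| * (delta / (`|C| + 1)) <= _).
    by rewrite ler_wpM2l // ltW // om_small.
  rewrite mulrA ler_pdivrMr //; nra.
split=> [i j | i j k]; first exact: le_trans (sigma_near i j) (ler_norm _).
apply: le_trans (dsigma_le i j k) _.
by rewrite ler_wpM2r ?invr_ge0 ?enorm_ge0 ?ler_norm.
Qed.

Lemma profile_static_supersolution (R : realType) (n : nat) (n_ge3 : (3 <= n)%N)
    (sigma : 'rV[R]_n -> 'M[R]_n) (x : 'rV[R]_n) (d L : R) :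
  0 < L -> 0 < enorm x -> sigma x \in unitmx -> n%:R ^+ 6 * d <= 200^-1 ->
  (forall i j, `|sigma x i j - (i == j)%:R| <= d) ->
  (forall i j k, `|partial k (fun y => sigma y i j) x| <= d / enorm x) ->
  grad_sq sigma (profile L) x < 1 /\ static_op sigma (profile L) x <= 0.
Proof.
move=> L_gt0 x_gt0 sigma_unit d_small sigma_near dsigma_le.
set N := n%:R : R.
have N_ge1 : 1 <= N by rewrite ler1n; apply: leq_trans n_ge3.
have d_ge0 : 0 <= d.
  exact: le_trans (normr_ge0 _) (sigma_near (Ordinal n_ge3) (Ordinal n_ge3)).
have Nd_small k : (k <= 6)%N -> N ^+ k * d <= 200^-1.
  by move=> k_le; apply: le_trans d_small; rewrite ler_wpM2r // ler_weXn2l.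
have Nd_le2 : N * d <= 2^-1 by move: (Nd_small 1%N isT); rewrite expr1; lra.
have Sinv_near := invmx_near_id sigma_unit sigma_near Nd_le2.
have Sinv_le k l : `|sinv sigma x k l| <= 2.
  apply: le_trans (norm_entry_le_near_id (Sinv_near k l)) _.
  by move: (Nd_small 0%N isT); rewrite expr0 mul1r; lra.
have Gm_le k i j : `|christoffel sigma k i j x| * enorm x <= 3 * N * d.
  have -> : 3 * N * d = 3 / 2 * N * 2 * (d / enorm x) * enorm x.
    by field; rewrite gt_eqF.
  by rewrite ler_pM2r // norm_christoffel_le.
set t := shifted_sqnorm (L ^+ 4) x.
have t_gt0 : 0 < t by rewrite shifted_sqnorm_gt0 ?exprn_gt0.
have a_gt0 : 0 < profile L x / (2 * t).
  by apply: divr_gt0; [exact: profile_gt0 | exact: mulr_gt0].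
have kap_le : 5 / (2 * t) * enorm x ^+ 2 <= 5 / 2.
  rewrite mulrAC ler_pdivrMr ?mulr_gt0 // -mulrA ler_pM2l //.
  by rewrite /t shifted_sqnorm_enorm; have := exprn_gt0 4 L_gt0; lra.
rewrite /grad_sq /static_op /gmetric /shess.
apply: (@static_estimate R n n_ge3 _ (5 / (2 * t)) (2 * d) (3 * N * d) (enorm x)
  (fun k => x 0 k) (sinv sigma x) (fun k i j => christoffel sigma k i j x)).
- exact: a_gt0.
- exact: enorm_ge0.
- exact: enorm_sqE.
- exact: profile_slope_small.
- by rewrite divr_ge0 ?mulr_ge0 ?ltW.
- exact: kap_le.
- exact: Sinv_near.
- by move: (Nd_small 2%N isT); lra.
- exact: Gm_le.
- have -> : N ^+ 5 * (3 * N * d) = 3 * (N ^+ 6 * d) by ring.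
  by move: (Nd_small 6%N isT); lra.
- by move=> k; rewrite partial_profile.
- by move=> i j; rewrite partial2_profile.
Qed.

Theorem corollary3p2 (R : realType) (n : nat) (hn : (3 <= n)%N)
    (sigma : 'rV[R]_n -> 'M[R]_n) (Rs : R)
    (hsig : riemannian_exterior Rs sigma)
    (haf : asymptotically_flat sigma) :
  forall r1 : R, 0 < r1 ->
  exists r0 : R, r1 <= r0 /\
  forall h : R, 0 < h ->
  exists b : 'rV[R]_n -> R,
    (* rotational symmetry *)
    (exists beta : R -> R, forall x, r0 <= enorm x -> b x = beta (enorm x)) /\
    (* C^2 regularity on the domain |x| >= r0 *)
    (forall x, r0 <= enorm x ->
       differentiable b x /\ forall j, differentiable (partial j b) x) /\
    (* (i) *) (forall x, r0 <= enorm x -> 0 < b x) /\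
    (* (ii) *) (forall eps : R, 0 < eps ->
                  exists M : R, forall x, M <= enorm x -> `|b x| < eps) /\
    (* (iii) *) (forall x, enorm x = r0 -> h <= b x) /\
    (* (iv): |grad b|_sigma < 1 (so g^{ij} is defined) and static supersolution *)
    (forall x, r0 <= enorm x ->
       grad_sq sigma b x < 1 /\ static_op sigma b x <= 0).
Proof.
move=> r1 r1_gt0; have [_ [_ sigma_posdef]] := hsig.
have N6_gt0 : 0 < n%:R ^+ 6 :> R by rewrite exprn_gt0 // ltr0n (leq_trans _ hn).
have delta_gt0 : 0 < 200^-1 / n%:R ^+ 6 :> R by rewrite divr_gt0.
have [rho near_id] := asymptotically_flat_near_id haf delta_gt0.
pose r0 := Num.max r1 (Num.max (Rs + 1) rho).
have [r1_le Rs1_le rho_le] : [/\ r1 <= r0, Rs + 1 <= r0 & rho <= r0].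
  by rewrite !le_max !lexx !orbT.
exists r0; split=> // h h_gt0; pose L := 10 * h + r0 + 1.
have L_ge1 : 1 <= L by rewrite /L; lra.
have L_gt0 : 0 < L by lra.
exists (profile L); split; [|split; [|split; [|split; [|split]]]].
- by exists (fun r => L ^+ 3 / 5 * (L ^+ 4 + r ^+ 2) `^ (- 4^-1)) => x _;
    rewrite profile_radial.
- by move=> x _; split=> [|j];
    [exact: differentiable_profile | exact: differentiable_partial_profile].
- by move=> x _; exact: profile_gt0.
- exact: profile_small_at_infinity.
- by move=> x x_r0; apply: profile_ge => //; rewrite ?x_r0 /L; lra.
move=> x x_far.
have [d d_small [sigma_near dsigma_le]] := near_id x (le_trans rho_le x_far).
apply: profile_static_supersolution => //; first by lra.
- by apply/posdef_unitmx/sigma_posdef; lra.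
- by rewrite mulrC -ler_pdivlMr.
Qed.
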